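(* Let $d\geq3$ and $h\geq 2$. Then \[ \nu_2(T'(d,h))=\begin{cases}\dfrac{2\big((d-1)^{h+1}-(d-1)\big)}{(d-1)^2-1} & \text{if } h \text{ is even},\\[2ex] \dfrac{2\big((d-1)^{h+1}-1\big)}{(d-1)^2-1} & \text{if } h \text{ is odd}.\end{cases} \]
   Context: $T'(d,h)$ is the rooted tree of depth $h$ in which the root has $d-1$ children, every non-root vertex at depth less than $h$ has $d-1$ children (so degree $d$), and all leaves are at depth $h$ (equivalently, the $d$-regular tree of depth $h$ with one principal branch of the root deleted). A $2$-matching of a graph is a set of edges such that every vertex is incident to at most two of them; $\nu_2(G)$ is the maximum size of a $2$-matching of $G$. *)

From mathcomp Require Import all_boot.
Set Implicit Arguments. Unset Strict Implicit. Unset Printing Implicit Defensive.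

Section Graph.
Variable T : finType.
Variable e : rel T.

Definition is_edge (E : {set T}) : bool :=
  [exists x, exists y, [&& x != y, e x y & E == [set x; y]]].

Definition two_matching (M : {set {set T}}) : bool :=
  [forall E in M, is_edge E] && [forall v, #|[set E in M | v \in E]| <= 2].

Definition nu2 : nat := \max_(M : {set {set T}} | two_matching M) #|M|.
End Graph.

(* The tree T'(d,h): vertices are words over {0,..,d-2} (the d-1 child labels)
   of length at most h; the root is the empty word, and a word u is adjacent to
   v iff v = u ++ [:: i] for some i or vice versa (parent/child). *)
Definition Tvert (d h : nat) : finType := {bseq h of 'I_(d.-1)}.

Definition parent_of (d h : nat) (u v : Tvert d h) : bool :=
  (size (v : seq _) == (size (u : seq _)).+1) &&
  ((u : seq _) == take (size (u : seq _)) (v : seq _)).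

Definition Tadj (d h : nat) : rel (Tvert d h) :=
  fun u v => parent_of u v || parent_of v u.

From mathcomp Require Import all_boot zify.
Set Implicit Arguments. Unset Strict Implicit. Unset Printing Implicit Defensive.

(* Let C be the set of vertices of T'(d,h) at a depth k with h + k odd.  An
   edge joins consecutive depths, so C is a vertex cover, and since a vertex of
   C lies in at most two edges of a 2-matching, no 2-matching has more than
   2|C| edges.  Vertices of C are not leaves, so each has d - 1 >= 2 children;
   joining it to two of them gives a 2-matching with 2|C| edges.  Hence nu_2 is
   twice the sum of (d-1)^k over k <= h with h + k odd, a geometric series. *)

Section TwoMatching.
Variables (T : finType) (e : rel T).

Lemma nu2_eq (M : {set {set T}}) : two_matching e M ->
  (forall M', two_matching e M' -> #|M'| <= #|M|) -> nu2 e = #|M|.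
Proof.
move=> matchM maxM; apply/eqP; rewrite eqn_leq; apply/andP; split.
  exact/bigmax_leqP.
exact: leq_bigmax_cond.
Qed.

Lemma two_matching_card_le_cover (C : {set T}) (M : {set {set T}}) :
    (forall E, is_edge e E -> exists2 c, c \in C & c \in E) ->
  two_matching e M -> #|M| <= 2 * #|C|.
Proof.
move=> cover /andP[/forall_inP edgeM /forallP degM].
rewrite -sum1_card.
apply: (@leq_trans (\sum_(E in M) \sum_(c in C) (c \in E))).
  apply: leq_sum => E /edgeM /cover[c cC cE].
  by rewrite (bigD1 c) //= cE.
rewrite exchange_big /= mulnC -sum_nat_const; apply: leq_sum => c _.
apply: leq_trans (degM c).
rewrite -sum1_card [leqLHS]big_mkcond [leqRHS]big_mkcond /=.
by apply: leq_sum => E _; rewrite !inE; case: (E \in M); case: (c \in E).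
Qed.

End TwoMatching.

Lemma card_bseq_size (T : finType) n k : k <= n ->
  #|[set s : {bseq n of T} | size s == k]| = #|T| ^ k.
Proof.
move=> le_kn; pose g (t : k.-tuple T) : {bseq n of T} := widen_bseq le_kn t.
have -> : [set s : {bseq n of T} | size s == k] = g @: [set: k.-tuple T].
  apply/setP => s; rewrite !inE; apply/idP/imsetP => [size_s | [t _ ->]].
    by exists (Tuple size_s) => //; apply: val_inj.
  by rewrite size_widen_bseq size_tuple.
rewrite card_imset ?cardsT ?card_tuple // => t1 t2 /(congr1 val) /= eq_t.
exact: val_inj.
Qed.

Lemma set2_sep_inj (T : finType) (A : {pred T}) (a b a' b' : T) :
  a \in A -> b \notin A -> a' \in A -> b' \notin A ->
  [set a; b] = [set a'; b'] -> a = a' /\ b = b'.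
Proof.
move=> aA bNA a'A b'NA eq_ab.
have /set2P[// | eq_a] : a \in [set a'; b'] by rewrite -eq_ab set21.
  have /set2P[eq_b | // ] : b \in [set a'; b'] by rewrite -eq_ab set22.
    by move: bNA; rewrite eq_b a'A.
  by move: b'NA; rewrite -eq_a aA.
Qed.

Section Tree.
Variables d h : nat.
Notation V := (Tvert d h).
Implicit Types u v : V.

Definition cover : {set V} := [set u : V | odd (h + size u)].

Lemma in_cover u : (u \in cover) = odd (h + size u).
Proof. by rewrite inE. Qed.

Lemma cover_edge E : is_edge (@Tadj d h) E -> exists2 c, c \in cover & c \in E.
Proof.
move=> /existsP[u /existsP[v /and3P[_ adj_uv /eqP->]]].
have [c [c' [-> size_c']]] :
    exists c c', [set u; v] = [set c; c'] /\ size c' = (size c).+1.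
  case/orP: adj_uv => /andP[/eqP size_v _]; first by exists u, v.
  by exists v, u; rewrite setUC.
case: (boolP (odd (h + size c))) => [odd_c | even_c].
  by exists c; rewrite !inE ?eqxx.
by exists c'; rewrite !inE ?eqxx ?orbT // size_c' addnS /= even_c.
Qed.

Lemma card_cover : #|cover| = \sum_(k < h.+1 | odd (h + k)) d.-1 ^ k.
Proof.
pose depth u := @Ordinal h.+1 (size u) (size_bseq u).
rewrite -sum1_card (partition_big depth (fun k : 'I_h.+1 => odd (h + k))) /=;
  last by move=> u; rewrite in_cover.
apply: eq_bigr => k odd_k.
transitivity #|[set u : V | size u == k]|.
  rewrite -sum1_card; apply: eq_bigl => u; rewrite !inE -val_eqE /=.
  by case: eqP => [-> | _]; rewrite ?odd_k ?andbF.
by rewrite card_bseq_size ?card_ord // -ltnS.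
Qed.

Section LowerBound.
Hypothesis two_labels : 2 <= d.-1.

Definition child u (i : 'I_2) : V :=
  insubd u (rcons (u : seq _) (widen_ord two_labels i)).

Lemma cover_size u : u \in cover -> size u < h.
Proof.
rewrite in_cover ltn_neqAle size_bseq andbT; apply: contraL => /eqP->.
by rewrite addnn odd_double.
Qed.

Lemma childE u i : u \in cover ->
  val (child u i) = rcons (u : seq _) (widen_ord two_labels i).
Proof. by move=> /cover_size lt_uh; rewrite insubdK // -topredE /= size_rcons. Qed.

Lemma size_child u i : u \in cover -> size (child u i) = (size u).+1.
Proof. by move=> /childE ->; rewrite size_rcons. Qed.

Lemma child_notin_cover u i : u \in cover -> child u i \notin cover.
Proof. by move=> uC; rewrite in_cover size_child // addnS /= -in_cover uC. Qed.

Lemma child_inj u1 u2 i1 i2 : u1 \in cover -> u2 \in cover ->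
  child u1 i1 = child u2 i2 -> u1 = u2 /\ i1 = i2.
Proof.
move=> u1C u2C /(congr1 val); rewrite !childE //.
by move=> /rcons_inj[/val_inj-> /val_inj->].
Qed.

Lemma adj_child u i : u \in cover -> @Tadj d h u (child u i).
Proof.
move=> uC; apply/orP; left; rewrite /parent_of size_child // eqxx /=.
by rewrite childE // -cats1 take_size_cat.
Qed.

Definition child_edge (p : V * 'I_2) : {set V} := [set p.1; child p.1 p.2].

Definition child_matching := child_edge @: setX cover [set: 'I_2].

Lemma child_edge_inj : {in setX cover [set: 'I_2] &, injective child_edge}.
Proof.
move=> [u1 i1] [u2 i2]; rewrite !in_setX /= !in_setT !andbT => u1C u2C eq_E.
have [eq_u eq_c] := set2_sep_inj u1C (child_notin_cover i1 u1C) u2C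
  (child_notin_cover i2 u2C) eq_E.
by have [-> ->] := child_inj u1C u2C eq_c.
Qed.

Lemma card_child_matching : #|child_matching| = 2 * #|cover|.
Proof.
by rewrite card_in_imset ?cardsX ?cardsT ?card_ord 1?mulnC //; exact: child_edge_inj.
Qed.

Lemma child_matching_degree v : #|[set E in child_matching | v \in E]| <= 2.
Proof.
set P := [set p in setX cover [set: 'I_2] | v \in child_edge p].
have -> : [set E in child_matching | v \in E] = child_edge @: P.
  apply/setP => E; rewrite !inE.
  apply/andP/imsetP => [[/imsetP[p pC ->] vE] | [p]].
    by exists p; rewrite // inE pC.
  by rewrite inE => /andP[pC vE] ->; split; first exact: imset_f.
apply: leq_trans (leq_imset_card _ _) _.
case: (boolP (v \in cover)) => [vC | vNC].
  apply: leq_trans (_ : #|[set (v, i) | i : 'I_2]| <= 2); last first.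
    by rewrite (leq_trans (leq_imset_card _ _)) ?card_ord.
  apply/subset_leq_card/subsetP => -[u i].
  rewrite in_set in_setX in_setT andbT /= in_set2.
  case/andP=> uC /orP[/eqP-> | /eqP eq_v]; first exact: imset_f.
  by move: vC; rewrite eq_v (negbTE (child_notin_cover i uC)).
apply: leq_trans (_ : 1 <= 2) => //; apply/card_le1_eqP => -[u1 i1] [u2 i2].
rewrite !inE -!in_cover /= !andbT => /andP[u1C /orP[/eqP eq_v1 | /eqP eq_v1]];
  first by rewrite eq_v1 u1C in vNC.
move=> /andP[u2C /orP[/eqP eq_v2 | /eqP eq_v2]];
  first by rewrite eq_v2 u2C in vNC.
by have [-> ->] := child_inj u1C u2C (etrans (esym eq_v1) eq_v2).
Qed.

Lemma child_matching_two_matching : two_matching (@Tadj d h) child_matching.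
Proof.
apply/andP; split; last by apply/forallP => v; exact: child_matching_degree.
apply/forall_inP => E /imsetP[[u i]]; rewrite in_setX in_setT andbT => uC ->.
apply/existsP; exists u; apply/existsP; exists (child u i).
apply/and3P; split => //; last exact: adj_child.
by apply/eqP => eq_u; move: (child_notin_cover i uC); rewrite -eq_u uC.
Qed.
End LowerBound.
End Tree.

Definition alt_powsum (m h : nat) := \sum_(k < h.+1 | odd (h + k)) m ^ k.

Lemma alt_powsumS m h : alt_powsum m h.+1 = m * alt_powsum m h + ~~ odd h.
Proof.
rewrite /alt_powsum big_mkcond big_ord_recl /= addn0 addnC big_distrr.
rewrite [in RHS]big_mkcond /=; congr (_ + _).
by apply: eq_bigr => k _; rewrite /bump /= add1n addnS negbK expnS.
Qed.

Lemma alt_powsum_geom m h :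
  m ^ 2 * alt_powsum m h + (if odd h then 1 else m) = m ^ h.+1 + alt_powsum m h.
Proof.
elim: h => [|h IH]; first by rewrite /alt_powsum big_mkcond big_ord1 muln0 addn0.
have := congr1 (muln m) IH; rewrite alt_powsumS /= [m ^ h.+2]expnS.
by case: (odd h) => /=; nia.
Qed.

Lemma alt_powsum_div m h : 1 < m ->
  2 * alt_powsum m h = if ~~ odd h then (2 * (m ^ h.+1 - m)) %/ (m ^ 2 - 1)
                       else (2 * (m ^ h.+1 - 1)) %/ (m ^ 2 - 1).
Proof.
move=> m_gt1; have m2_pos : 0 < m ^ 2 - 1 by rewrite -mulnn; nia.
have : m ^ h.+1 - (if odd h then 1 else m) = (m ^ 2 - 1) * alt_powsum m h.
  by rewrite mulnBl mul1n; have := alt_powsum_geom m h; lia.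
by case: (odd h) => /= ->; rewrite mulnCA mulKn.
Qed.

Theorem lemma5p4 (d h : nat) : 3 <= d -> 2 <= h ->
  nu2 (@Tadj d h) =
  if ~~ odd h then (2 * ((d - 1) ^ h.+1 - (d - 1))) %/ ((d - 1) ^ 2 - 1)
  else (2 * ((d - 1) ^ h.+1 - 1)) %/ ((d - 1) ^ 2 - 1).
Proof.
move=> d_ge3 _; have two_labels : 2 <= d.-1 by rewrite -subn1 ltn_subRL.
rewrite (nu2_eq (child_matching_two_matching h two_labels)) => [|M matchM].
  by rewrite card_child_matching card_cover subn1; exact: alt_powsum_div.
rewrite card_child_matching; apply: two_matching_card_le_cover matchM.
exact: cover_edge.
Qed.
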